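(* Let $(X,d)$ be a finite metric space with $n$ points, doubling dimension $\dim$, and all inter-point distances greater than $1$; let $1\le k\le n-2$ be an integer, $0<\varepsilon\le\frac13$, $v\in X$, and let $Q$ and $H_Q$ be as constructed in the context. Then $H_Q$ is a $(k,1+3\varepsilon,v)$-vertex-fault-tolerant single-sink spanner for $Q\cup\{v\}$, i.e. for every $S\subseteq Q$ with $|S|\le k$ and every $x\in Q\setminus S$ we have $d_{H_Q\setminus S}(v,x)\le(1+3\varepsilon)d(v,x)$; moreover $H_Q$ has maximum degree $O(\Gamma k)$ and hop-diameter $O(\log n)$ (every $x\in Q$ is joined to $v$ in $H_Q$ by a path of length at most $(1+3\varepsilon)d(v,x)$ with $O(\log n)$ edges).
   Context: The doubling dimension $\dim$ is the smallest $\rho$ such that every ball can be covered by $2^\rho$ balls of half the radius. $B(x,r)=\{y: d(x,y)\le r\}$. A set $Y$ is an $r$-net of a set $U$ if $Y\subseteq U$, every point of $U$ is within distance $r$ of some point of $Y$, and distinct points of $Y$ are at distance $>r$. Let $\Delta=\max_{x,y}d(x,y)$, $\ell=\lceil\log_{1/\varepsilon}\Delta\rceil$, $r_0=1$ and $r_i=\varepsilon^{-i}$ for $i\in\{1,\dots,\ell\}$. Rings: $R_0=\{v\}$ and $R_i=B(v,r_i)\setminus B(v,r_{i-1})$ for $1\le i\le\ell$. For each $i\ge1$ let $N_i$ be an $\varepsilon r_{i-1}$-net of $R_i$, and let $\Gamma=\lceil\varepsilon^{-4\dim}\rceil$. For each $y\in N_i$ the cluster $C_y$ consists of the points $x\in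 R_i$ whose closest point in $N_i$ is $y$ (ties broken arbitrarily). For each such $y$ choose an arbitrary set of portals $Q_y\subseteq C_y$ with $|Q_y|=\min(k+1,|C_y|)$, and let $Q=\bigcup_{i\ge1}\bigcup_{y\in N_i}Q_y$. Write $Q=\{q_1,\dots,q_m\}$ with $d(v,q_1)\le\cdots\le d(v,q_m)$. For $j\ge1$ let $A_j=\{q_l: (j-1)(k+1)+1\le l\le j(k+1)\}$, let $A_0=\{v\}$ and $A_i=A_0$ for $i<0$. $H_Q$ is the graph on $Q\cup\{v\}$ obtained by, for every $j\ge1$ with $A_j\neq\emptyset$, adding an edge between every point of $A_j$ and every point of $A_{\lceil (j-2\Gamma-1)/2\rceil}$; edge weights are distances $d$. $H\setminus S$ denotes $H$ with vertices of $S$ removed. Implicit constants in $O(\cdot)$ are absolute. *)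

From HB Require Import structures.
From mathcomp Require Import all_boot all_order all_algebra.
From mathcomp Require Import all_classical all_reals all_analysis.
Set Implicit Arguments. Unset Strict Implicit. Unset Printing Implicit Defensive.
Import Order.TTheory GRing.Theory Num.Theory.
Local Open Scope ring_scope.

Section Defs.
Variables (R : realType) (T : finType) (d : T -> T -> R).

Definition is_metric : Prop :=
  [/\ forall x, d x x = 0,
      forall x y, d x y = d y x,
      forall x y z, d x z <= d x y + d y z
    & forall x y, x != y -> 0 < d x y].

Definition ball (x : T) (r : R) : {set T} := [set y | d x y <= r].

Definition doubling_ok (rho : R) : Prop :=
  forall (x : T) (r : R), exists Cs : {set T},
    (#|Cs|%:R <= 2 `^ rho) /\ ball x r \subset \bigcup_(c in Cs) ball c (r / 2).

Definition is_doubling_dim (rho : R) : Prop :=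
  doubling_ok rho /\ forall rho', doubling_ok rho' -> rho <= rho'.

Definition diam : R := \big[Num.max/0]_(x : T) \big[Num.max/0]_(y : T) d x y.

Definition is_net (r : R) (U Y : {set T}) : Prop :=
  [/\ Y \subset U,
      forall x, x \in U -> exists2 y, y \in Y & d x y <= r
    & forall y1 y2, y1 \in Y -> y2 \in Y -> y1 != y2 -> r < d y1 y2].

Variables (v : T) (eps : R) (k : nat).

Definition lvl : int := Num.ceil (ln diam / ln eps^-1).
Definition lvln : nat := `|lvl|%N.

Definition rad (i : nat) : R := eps^-1 ^+ i.

Definition ring (i : nat) : {set T} :=
  if i == 0%N then [set v]
  else [set x | (d v x <= rad i) && ~~ (d v x <= rad i.-1)].

Definition in_levels (i : nat) : bool := (1 <= i)%N && (i%:Z <= lvl).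

Variables (N : nat -> {set T}) (ctr : nat -> T -> T) (P : nat -> T -> {set T}).

Definition valid_nets : Prop :=
  forall i, in_levels i -> is_net (eps * rad i.-1) (ring i) (N i).

Definition valid_ctr : Prop :=
  forall i, in_levels i -> forall x, x \in ring i ->
    ctr i x \in N i /\ forall y, y \in N i -> d x (ctr i x) <= d x y.

Definition cluster (i : nat) (y : T) : {set T} :=
  [set x in ring i | ctr i x == y].

Definition valid_portals : Prop :=
  forall i, in_levels i -> forall y, y \in N i ->
    P i y \subset cluster i y /\ #|P i y| = minn k.+1 #|cluster i y|.

Definition Qset : {set T} :=
  \bigcup_(i < lvln.+1 | in_levels i) \bigcup_(y in N i) P i y.

Variable (q : seq T).

Definition valid_order : Prop :=
  perm_eq q (enum Qset) /\ sorted (fun a b => d v a <= d v b) q.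

(** groups A_j ; q_l (1-based) sits at 0-based index l-1 in q *)
Definition Agrp (j : int) : {set T} :=
  if (j <= 0)%R then [set v]
  else [set x | (x \in q) &&
         (((`|j|%N).-1 * k.+1 <= index x q) && (index x q < `|j|%N * k.+1))%N].

Variable (rho : R).

Definition Gamma : int := Num.ceil (eps `^ (- (4 * rho))).

Definition partner (j : int) : int :=
  Num.ceil ((j%:~R - 2 * Gamma%:~R - 1) / 2 : R).

Definition HQ_edge (x y : T) : Prop :=
  exists j : int, (0 < j)%R /\ Agrp j != finset.set0 /\
    ((x \in Agrp j /\ y \in Agrp (partner j)) \/
     (y \in Agrp j /\ x \in Agrp (partner j))).

End Defs.

Fixpoint is_walk (T : Type) (E : T -> T -> Prop) (x : T) (p : seq T) : Prop :=
  match p with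
  | [::] => True
  | y :: p' => E x y /\ is_walk E y p'
  end.

Fixpoint wlen (R : realType) (T : Type) (d : T -> T -> R) (x : T) (p : seq T) : R :=
  match p with
  | [::] => 0
  | y :: p' => d x y + wlen d y p'
  end.

(* The portals are ordered by distance to [v] and cut into groups of [k+1].
   Packing in doubling dimension gives every net at most [Gamma/2] points, so two
   consecutive levels hold at most [Gamma (k+1)] portals; hence a portal lying
   [Gamma] groups before [x] is within [eps d(v,x)] of [v].  Group [j] is joined to
   group [ceil((j - 2 Gamma - 1)/2)], which is that far back: one of its [k+1]
   members survives any [k] faults, and recursing from it gives a walk of length at
   most [(1 + 3 eps) d(v,x)] whose number of hops is logarithmic, since the group
   index halves at every step.  Each group is joined to one earlier and at most two
   later groups, which bounds the degree by [O(Gamma k)]. *)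

From Pilot Require Import Defs.
From HB Require Import structures.
From mathcomp Require Import all_boot all_order all_algebra.
From mathcomp Require Import all_classical all_reals all_analysis.
From mathcomp Require Import unstable zify ring lra.
Import Order.TTheory GRing.Theory Num.Theory.
Set Implicit Arguments. Unset Strict Implicit. Unset Printing Implicit Defensive.
Local Open Scope ring_scope.

Definition index_window (T : finType) (q : seq T) (lo hi : nat) : {set T} :=
  [set w | (w \in q) && ((lo <= index w q) && (index w q < hi))%N].

Lemma card_index_window (T : finType) (q : seq T) lo hi :
  (#|index_window q lo hi| <= hi - lo)%N.
Proof.
have [->|[x0 _]] := set_0Vmem (index_window q lo hi); first by rewrite cards0.
apply: leq_trans (_ : #|[seq nth x0 q i | i <- iota lo (hi - lo)]| <= _)%N;
  last by rewrite (leq_trans (card_size _)) // size_map size_iota.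
apply: subset_leq_card; apply/fintype.subsetP => w.
rewrite inE => /andP[wq /andP[h1 h2]].
apply/mapP; exists (index w q); first by rewrite mem_iota; lia.
by rewrite nth_index.
Qed.

Lemma card_index_window_uniq (T : finType) (q : seq T) lo hi :
  uniq q -> (hi <= size q)%N -> #|index_window q lo hi| = (hi - lo)%N.
Proof.
move=> uq hs; apply/eqP; rewrite eqn_leq card_index_window /=.
case: q uq hs => [|x0 s] uq hs; first by move: hs; rewrite leqn0 => /eqP ->; rewrite sub0n.
set q := x0 :: s in uq hs *.
have u : uniq [seq nth x0 q i | i <- iota lo (hi - lo)].
  rewrite map_inj_in_uniq ?iota_uniq // => i j; rewrite !mem_iota => hi' hj'.
  have hi2 : (i < size q)%N by lia.
  have hj2 : (j < size q)%N by lia.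
  by move=> /eqP; rewrite nth_uniq // => /eqP.
rewrite -[X in (X <= _)%N](size_iota lo) -(size_map (nth x0 q)) -(card_uniqP u).
apply: subset_leq_card; apply/fintype.subsetP => w /mapP [i].
rewrite mem_iota => hi' ->; have his : (i < size q)%N by lia.
by rewrite inE (mem_nth x0 his) index_uniq //=; lia.
Qed.

Lemma is_walk_rcons (T : Type) (E : T -> T -> Prop) x p y :
  is_walk E x (rcons p y) <-> is_walk E x p /\ E (last x p) y.
Proof. by elim: p x => [|z p IH] x /=; [tauto | rewrite IH; tauto]. Qed.

Lemma wlen_rcons (R : realType) (T : Type) (d : T -> T -> R) x p y :
  wlen d x (rcons p y) = wlen d x p + d (last x p) y.
Proof. by elim: p x => [|z p IH] x /=; [rewrite add0r addr0 | rewrite IH addrA]. Qed.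

Lemma is_walk_sub (T : Type) (E E' : T -> T -> Prop) x p :
  (forall a b, E a b -> E' a b) -> is_walk E x p -> is_walk E' x p.
Proof. by move=> hE; elim: p x => [|y p IH] x //= [/hE h1 /IH h2]. Qed.

Section Packing.
Variables (R : realType) (T : finType) (d : T -> T -> R).
Hypothesis dsym : forall x y, d x y = d y x.
Hypothesis dtri : forall x y z, d x z <= d x y + d y z.

Lemma packing (B : R) :
  (forall x r, exists Cs : {set T}, #|Cs|%:R <= B /\
      Defs.ball d x r \subset \bigcup_(c in Cs) Defs.ball d c (r / 2)) ->
  forall m c r delta (Y : {set T}), Y \subset Defs.ball d c r ->
  (forall y1 y2, y1 \in Y -> y2 \in Y -> y1 != y2 -> delta < d y1 y2) ->
  2 * r <= 2 ^+ m * delta -> #|Y|%:R <= B ^+ m.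
Proof.
move=> hB; elim=> [|m IH] c r delta Y hY hsep hr.
  rewrite expr0 lern1; apply/card_le1_eqP => y1 y2 h1 h2.
  have [//|/(hsep _ _ h1 h2) h12] := eqVneq y1 y2; exfalso.
  move/fintype.subsetP: hY => hY; have := hY _ h1; have := hY _ h2.
  rewrite !inE expr0 in hr * => a2 a1.
  have := dtri y1 c y2; rewrite (dsym y1 c); lra.
have [Cs [hCs hcov]] := hB c r.
have hsub : Y \subset \bigcup_(c' in Cs) (Y :&: Defs.ball d c' (r / 2)).
  apply/fintype.subsetP => y hy.
  have /bigcupP [c' hc' hyc'] := fintype.subsetP hcov y (fintype.subsetP hY y hy).
  by apply/bigcupP; exists c' => //; rewrite inE hy.
have hcard := leq_trans (subset_leq_card hsub) (card_big_setU _ _ _).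
apply: le_trans (_ : (\sum_(c' in Cs) #|Y :&: Defs.ball d c' (r / 2)|)%:R <= _);
  first by rewrite ler_nat.
rewrite natr_sum; apply: le_trans (_ : \sum_(c' in Cs) B ^+ m <= _).
  apply: ler_sum => c' _; apply: (IH c' (r / 2) delta); first exact: subsetIr.
    by move=> y1 y2; rewrite !inE => /andP[h1 _] /andP[h2 _]; exact: hsep.
  by rewrite exprS in hr; lra.
rewrite sumr_const -mulr_natl exprS ler_wpM2r ?exprn_ge0 //.
exact: le_trans hCs.
Qed.

(* For [rho < 1] the covering number is at most 1, so packing allows no two
   distinct points. *)
Lemma doubling_dim_ge1 rho : (forall x, d x x = 0) ->
  (forall x y, x != y -> 0 < d x y) -> (1 < #|T|)%N -> doubling_ok d rho -> 1 <= rho.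
Proof.
move=> d0 dpos hT hdbl; rewrite leNgt; apply/negP => hr.
have hB x r : exists Cs : {set T}, #|Cs|%:R <= (1 : R) /\
    Defs.ball d x r \subset \bigcup_(c in Cs) Defs.ball d c (r / 2).
  have [Cs [h1 h2]] := hdbl x r; exists Cs; split => //.
  rewrite lern1 -ltnS -(ltr_nat R); apply: le_lt_trans h1 _.
  rewrite /powR ifF; last by apply/negbTE; lra.
  rewrite -[X in _ < X](@lnK _ 2) ?posrE // ltr_expR.
  have : 0 < ln (2 : R) by apply: ln_gt0; lra.
  nra.
move: hT; rewrite -cardsT => /card_gt1P [a [b [_ _ hab]]].
have hdab := dpos _ _ hab.
have h1 : [set a; b] \subset Defs.ball d a (d a b).
  by apply/fintype.subsetP => y; rewrite !inE => /orP[]/eqP ->; rewrite ?d0; lra.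
have h2 y1 y2 : y1 \in [set a; b] -> y2 \in [set a; b] -> y1 != y2 ->
    d a b / 2 < d y1 y2.
  by rewrite !inE => /orP[]/eqP -> /orP[]/eqP ->; rewrite ?eqxx // ?(dsym b a); lra.
have h3 : 2 * d a b <= 2 ^+ 2 * (d a b / 2) by rewrite expr2; lra.
have := packing hB h1 h2 h3.
by rewrite cards2 hab expr1n lern1.
Qed.

End Packing.

Section Numerics.
Variable R : realType.

Lemma exists_pow2_scale (eps : R) : 0 < eps -> 3 * eps <= 1 ->
  exists m : nat, 2 <= 2 ^+ m * eps ^+ 2 /\ 2 ^+ m * eps ^+ 2 < 4.
Proof.
move=> he0 he3; have he2 : 0 < eps ^+ 2 by apply: exprn_gt0.
have hex : exists n, 2 <= 2 ^+ n * eps ^+ 2.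
  have h0 : 0 <= 2 / eps ^+ 2 by apply: divr_ge0 => //; exact: ltW.
  have := archi_boundP h0; set n := Num.Def.archi_bound _ => hn.
  have : n%:R <= 2 ^+ n :> R by rewrite -natrX ler_nat ltnW // ltn_expl.
  by exists n; rewrite -ler_pdivrMr //; lra.
case: (ex_minnP hex) => m hm hmin; exists m; split => //.
case: m hm hmin => [|m] hm hmin.
  by move: hm; rewrite expr0 mul1r expr2 => h; nra.
have : ~~ (2 <= 2 ^+ m * eps ^+ 2) by apply/negP => /hmin; lia.
by rewrite -ltNge => h; rewrite exprS -mulrA; lra.
Qed.

Lemma ln2_ge_half : 1 / 2 <= ln (2 : R).
Proof.
have := @le_ln1Dx R (- (1 / 2)) ltac:(lra).
by rewrite (_ : 1 + - (1 / 2) = 2^-1) ?lnV ?posrE; lra.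
Qed.

Lemma ln3_ge_two_thirds : 2 / 3 <= ln (3 : R).
Proof.
have := @le_ln1Dx R (- (2 / 3)) ltac:(lra).
by rewrite (_ : 1 + - (2 / 3) = 3^-1) ?lnV ?posrE; lra.
Qed.

Lemma doubling_growth_le (rho eps : R) (m : nat) : 1 <= rho -> 0 < eps ->
  3 * eps <= 1 -> 2 ^+ m * eps ^+ 2 < 4 ->
  (2 `^ rho) ^+ m * 2 <= eps `^ (- (4 * rho)).
Proof.
move=> hr1 he0 he3 hm2.
have t2 : (0 : R) < 2 by lra.
have t3 : (0 : R) < 3 by lra.
have hl2 : 0 < ln (2 : R) by apply: ln_gt0; lra.
have hle : ln eps <= - ln (3 : R).
  by rewrite -lnV ?posrE // ler_ln ?posrE ?invr_gt0 //; lra.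
have h98 : 3 * ln (2 : R) <= 2 * ln (3 : R).
  have : ln ((2 : R) ^+ 3) <= ln ((3 : R) ^+ 2).
    by rewrite ler_ln ?posrE ?exprn_gt0 // !exprS expr0; lra.
  by rewrite (lnXn 3 t2) (lnXn 2 t3); lra.
have hlm : ln (2 : R) * m%:R + 2 * ln eps < 2 * ln (2 : R).
  have hp : 0 < 2 ^+ m * eps ^+ 2 by apply: mulr_gt0; apply: exprn_gt0.
  have h4 : (0 : R) < 4 by lra.
  have := hm2; rewrite -ltr_ln ?posrE //.
  rewrite lnM ?posrE ?exprn_gt0 // (lnXn m t2) (lnXn 2 he0).
  have -> : (4 : R) = 2 ^+ 2 by rewrite expr2; lra.
  by rewrite (lnXn 2 t2) -[ln 2 *+ m]mulr_natr !mulr2n; lra.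
have p1 : 0 <= rho * (2 * ln 2 - 2 * ln eps - ln 2 * m%:R) by apply: mulr_ge0; lra.
have p2 : 0 <= rho * (- ln eps - ln 3) by apply: mulr_ge0; lra.
have p3 : 0 <= rho * (2 * ln 3 - 3 * ln 2) by apply: mulr_ge0; lra.
have p4 : 0 <= (rho - 1) * ln 2 by apply: mulr_ge0; lra.
rewrite /powR pnatr_eq0 (gt_eqF he0) -expRM_natl.
rewrite -[X in _ * X <= _](@lnK _ 2) ?posrE // -expRD ler_expR; lra.
Qed.

Lemma log2_le_ln (n t : nat) : (3 <= n)%N -> (2 ^ t <= n)%N ->
  t.+2%:R <= 6%N%:R * ln (n%:R : R).
Proof.
move=> h3 h2; have hn : (0 : R) < n%:R by rewrite ltr0n; lia.
have l3 : ln (3 : R) <= ln (n%:R : R).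
  by rewrite ler_ln ?posrE // ?(ler_nat R 3 n) //; lra.
have lt : ln (2 : R) *+ t <= ln (n%:R : R).
  rewrite -lnXn; last lra.
  by rewrite ler_ln ?posrE ?exprn_gt0 // -natrX ler_nat.
have := ln2_ge_half; have := ln3_ge_two_thirds => a3 a2.
have p : 0 <= t%:R * (ln (2 : R) - 1 / 2) by apply: mulr_ge0; [apply: ler0n | lra].
move: lt; rewrite -[ln 2 *+ t]mulr_natr => lt.
by rewrite -addn2 natrD; lra.
Qed.

End Numerics.

Lemma ceil_half_bounds (R : realType) (j g : int) :
  let c := Num.ceil ((j%:~R - 2 * g%:~R - 1) / 2 : R) in
  (2 * c - 2 < j - 2 * g - 1)%R /\ (j - 2 * g - 1 <= 2 * c)%R.
Proof.
move=> c; have /andP[h1 h2] := ceil_itv ((j%:~R - 2 * g%:~R - 1) / 2 : R).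
rewrite -/c intrD intrN in h1 h2.
split; [rewrite -(ltr_int R) | rewrite -(ler_int R)]; rewrite !intrD !intrM !intrN /=; lra.
Qed.

Lemma mulnBpred n m : (0 < n)%N -> (n * m - n.-1 * m = m)%N.
Proof. by case: n => // n _; rewrite mulSn addnK. Qed.

Section Spanner.
Variables (R : realType) (T : finType) (d : T -> T -> R) (rho eps : R) (k : nat)
  (v : T) (N : nat -> {set T}) (ctr : nat -> T -> T) (P : nat -> T -> {set T})
  (q : seq T).
Hypotheses (hmet : is_metric d) (hdim : is_doubling_dim d rho)
  (hk1 : (1 <= k)%N) (hkn : (k <= #|T| - 2)%N) (he0 : 0 < eps) (he3 : eps <= 3^-1)
  (hnets : valid_nets d v eps N) (hport : valid_portals d v eps k N ctr P)
  (hord : valid_order d v eps N P q).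

Local Notation Q := (Qset d eps N P).
Local Notation rad := (Defs.rad eps).
Local Notation level := (in_levels d eps).
Local Notation A := (Agrp v k q).
Local Notation partner := (partner eps rho).
Local Notation H := (HQ_edge v eps k q rho).

Lemma d0 x : d x x = 0. Proof. by case: hmet. Qed.
Lemma dsym x y : d x y = d y x. Proof. by case: hmet. Qed.
Lemma dtri x y z : d x z <= d x y + d y z. Proof. by case: hmet. Qed.
Lemma dpos x y : x != y -> 0 < d x y. Proof. by case: hmet => _ _ _; apply. Qed.
Lemma dge0 x y : 0 <= d x y.
Proof. by have [->|/dpos/ltW //] := eqVneq x y; rewrite d0. Qed.

Lemma eps_le : 3 * eps <= 1.
Proof. by have := ler_wpM2l (_ : 0 <= 3) he3; rewrite mulfV //; lra. Qed.

Lemma rad_gt0 i : 0 < rad i.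
Proof. by apply: exprn_gt0; rewrite invr_gt0. Qed.

Lemma ltr_rad i j : (rad i < rad j) = (i < j)%N.
Proof. by rewrite /Defs.rad ltr_eXn2l // invf_gt1 //; have := eps_le; lra. Qed.

Lemma radS i : rad i.+1 = eps^-1 * rad i.
Proof. by rewrite /Defs.rad exprS. Qed.

Lemma level_gt0 i : level i -> (0 < i)%N.
Proof. by case/andP. Qed.

Lemma ringE i x : (0 < i)%N ->
  (x \in ring d v eps i) = (d v x <= rad i) && (rad i.-1 < d v x).
Proof.
by move=> hi; rewrite /ring gtn_eqF // inE -real_ltNge // num_real.
Qed.

Definition portals i : {set T} :=
  if level i then \bigcup_(y in N i) P i y else finset.set0.

Lemma mem_Q x : x \in Q ->
  exists i, [/\ level i, x \in portals i & x \in ring d v eps i].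
Proof.
move=> /bigcupP [[i hi] /= hl] /bigcupP [y hy hx]; exists i.
have [/fintype.subsetP /(_ x hx)] := hport hl hy.
by rewrite /portals hl inE => /andP[hxr _]; split => //; apply/bigcupP; exists y.
Qed.

Lemma v_notin_Q : v \notin Q.
Proof.
apply/negP => /mem_Q [i [/level_gt0 hi _]]; rewrite ringE // d0 => /andP[_].
by rewrite ltNge ltW // rad_gt0.
Qed.

Lemma mem_q x : (x \in q) = (x \in Q).
Proof. by case: hord => /perm_mem -> _; rewrite mem_enum. Qed.

Lemma uniq_q : uniq q.
Proof. by case: hord => /perm_uniq -> _; exact: enum_uniq. Qed.

Lemma size_q : (size q <= #|T|)%N.
Proof. by rewrite (perm_size hord.1) -cardE max_card. Qed.

Lemma le_dist_index x y : x \in q -> y \in q ->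
  (index x q <= index y q)%N -> d v x <= d v y.
Proof.
move=> hx hy hxy.
have := @sorted_leq_nth _ (fun a b => d v a <= d v b) _ _ v _ hord.2 (index x q) (index y q).
rewrite !nth_index //; apply; rewrite ?inE ?index_mem //.
by move=> b a c /= h1 h2; apply: le_trans h1 h2.
Qed.

Lemma rho_ge1 : 1 <= rho.
Proof.
have [hok _] := hdim; apply: (doubling_dim_ge1 dsym dtri d0 dpos _ hok).
by move: hk1 hkn; clear; lia.
Qed.

Lemma card_net i : level i -> #|N i|%:R * 2 <= eps `^ (- (4 * rho)).
Proof.
move=> hl; have hi := level_gt0 hl.
have [m [hm1 hm2]] := exists_pow2_scale he0 eps_le.
have [hsub _ hsepN] := hnets hl.
have hball : N i \subset Defs.ball d v (rad i).
  apply/fintype.subsetP => y /(fintype.subsetP hsub).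
  by rewrite ringE // inE => /andP[].
have hr : 2 * rad i <= 2 ^+ m * (eps * rad i.-1).
  rewrite -(prednK hi) radS /=; have hp := rad_gt0 i.-1.
  have -> : 2 ^+ m * (eps * rad i.-1) = (2 ^+ m * eps ^+ 2) * (eps^-1 * rad i.-1).
    by rewrite expr2; field; exact: lt0r_neq0.
  by rewrite ler_wpM2r // mulr_ge0 // ?invr_ge0 ltW.
have hN := packing dsym dtri hdim.1 hball hsepN hr.
apply: le_trans (doubling_growth_le rho_ge1 he0 eps_le hm2).
by rewrite ler_wpM2r.
Qed.

Definition G := `|Gamma eps rho|%N.

Lemma Gamma_ge : eps `^ (- (4 * rho)) <= (Gamma eps rho)%:~R.
Proof. exact: ceil_ge. Qed.

Lemma GammaE : Gamma eps rho = G%:Z /\ (0 < G)%N.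
Proof.
have h1 : 1 <= eps `^ (- (4 * rho)).
  rewrite /powR (gt_eqF he0) leNgt expR_lt1 -leNgt.
  have := rho_ge1; have := eps_le.
  have : ln eps < 0 by apply: ln_lt0; apply/andP; split => //; have := eps_le; lra.
  nra.
have hG : (1 <= Gamma eps rho)%R by rewrite -(ler_int R); exact: le_trans h1 Gamma_ge.
rewrite /G; split; first by rewrite gez0_abs //; move: hG; clear; lia.
by move: hG; clear; lia.
Qed.

Lemma GammaR : (Gamma eps rho)%:~R = G%:R :> R.
Proof. by rewrite GammaE.1. Qed.

Lemma card_portals i : #|portals i|%:R * 2 <= G%:R * k.+1%:R :> R.
Proof.
rewrite /portals; case: ifP => hl; last by rewrite cards0 mul0r mulr_ge0.
have hU : (#|\bigcup_(y in N i) P i y| <= #|N i| * k.+1)%N.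
  apply: leq_trans (card_big_setU _ _ _) _.
  rewrite -sum1_card big_distrl /=; apply: leq_sum => y hy.
  by rewrite mul1n; have [_ ->] := hport hl hy; exact: geq_minl.
have hN := le_trans (card_net hl) Gamma_ge; rewrite GammaR in hN.
move: hU; rewrite -(ler_nat R) natrM => hU.
have := ler0n R k.+1; have := ler0n R #|N i|; nra.
Qed.

Lemma adjacent_levels i j x y : level i -> level j ->
  x \in ring d v eps i -> y \in ring d v eps j ->
  eps * d v x < d v y -> d v y <= d v x -> j = i.-1 \/ j = i.
Proof.
move=> hi hj; rewrite !ringE ?level_gt0 // => /andP[hx1 hx2] /andP[hy1 hy2] hlo hhi.
have hji : (j <= i)%N.
  have : rad j.-1 < rad i by lra.
  by rewrite ltr_rad; move: (level_gt0 hj); clear; lia.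
suff : (i.-1 <= j)%N by move: hji; clear; lia.
have [hi2|hi2] := ltnP i 2; first by move: hi2; clear; lia.
have e : eps * rad i.-1 = rad i.-2.
  rewrite (_ : i.-1 = i.-2.+1); last by move: hi2; clear; lia.
  by rewrite radS mulrA mulfV ?mul1r //; exact: lt0r_neq0.
have : eps * rad i.-1 < eps * d v x by rewrite ltr_pM2l.
rewrite e => h; have : rad i.-2 < rad j by lra.
by rewrite ltr_rad; move: hi2; clear; lia.
Qed.

Lemma index_window_sub_portals a b i : a \in q -> b \in q -> level i ->
  a \in ring d v eps i -> eps * d v a < d v b ->
  index_window q (index b q) (index a q).+1 \subset portals i.-1 :|: portals i.
Proof.
move=> ha hb hl har hlt; apply/fintype.subsetP => w.
rewrite inE => /andP[hw /andP[h1 h2]].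
have hwQ : w \in Q by rewrite -mem_q.
have [j [hlj hwU hwr]] := mem_Q hwQ.
have dwa : d v w <= d v a by apply: le_dist_index => //; move: h2; clear; lia.
have dbw : d v b <= d v w by apply: le_dist_index.
have := adjacent_levels hl hlj har hwr (lt_le_trans hlt dbw) dwa.
by rewrite inE; case=> <-; rewrite hwU ?orbT.
Qed.

(* Two consecutive levels hold at most [G (k+1)] portals, so a portal that far
   back in the order must lie a whole level closer to [v]. *)
Lemma index_gap_dist_le a b : a \in q -> b \in q ->
  (index b q + G * k.+1 < index a q)%N -> d v b <= eps * d v a.
Proof.
move=> ha hb hab; rewrite leNgt; apply/negP => hlt.
have haQ : a \in Q by rewrite -mem_q.
have [i [hl _ har]] := mem_Q haQ.
have hW := subset_leq_card (index_window_sub_portals ha hb hl har hlt).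
rewrite card_index_window_uniq ?uniq_q ?index_mem // in hW.
have hU := (leq_card_setU (portals i.-1) (portals i)).1.
have hsum : (G * k.+1 + 2 <= #|portals i.-1| + #|portals i|)%N.
  by move: hW hU hab; clear; lia.
have := card_portals i.-1; have := card_portals i.
by move: hsum; rewrite -(ler_nat R) !natrD natrM; lra.
Qed.

Definition group_of x := (index x q %/ k.+1).+1.

Lemma Agrp_pos (j : int) : (0 < j)%R ->
  A j = index_window q ((`|j|%N).-1 * k.+1) (`|j|%N * k.+1).
Proof. by move=> hj; rewrite /Agrp leNgt hj. Qed.

Lemma Agrp_nonpos (j : int) : (j <= 0)%R -> A j = [set v].
Proof. by move=> hj; rewrite /Agrp hj. Qed.

Lemma card_Agrp j : (#|A j| <= k.+1)%N.
Proof.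
have [hj|hj] := lerP j 0; first by rewrite Agrp_nonpos // cards1.
rewrite Agrp_pos //; apply: leq_trans (card_index_window _ _ _) _.
by rewrite mulnBpred //; move: hj; clear; lia.
Qed.

Lemma card_Agrp_full (j : int) : (0 < j)%R -> (`|j|%N * k.+1 <= size q)%N ->
  #|A j| = k.+1.
Proof.
move=> hj hs; rewrite Agrp_pos // card_index_window_uniq ?uniq_q //.
by rewrite mulnBpred //; move: hj; clear; lia.
Qed.

Lemma mem_Agrp_group x : x \in q -> x \in A (group_of x)%:Z.
Proof.
move=> hx; rewrite Agrp_pos // inE hx /= /group_of.
have := divn_eq (index x q) k.+1; have := ltn_pmod (index x q) (ltn0Sn k).
move: (index x q) => n; clear; lia.
Qed.

Lemma Agrp_group x (j : int) : (0 < j)%R -> x \in A j -> x \in q /\ j = (group_of x)%:Z.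
Proof.
case: j => [[|n]|n] // hj; rewrite Agrp_pos // inE => /andP[hx /andP[h1 h2]].
split => //; rewrite /group_of; congr Posz; congr S.
have := divn_eq (index x q) k.+1; have := ltn_pmod (index x q) (ltn0Sn k).
move: h1 h2 => /=; move: (index x q) => m; clear; nia.
Qed.

Lemma partner_bounds (j : int) :
  (2 * partner j - 2 < j - 2 * G%:Z - 1)%R /\ (j - 2 * G%:Z - 1 <= 2 * partner j)%R.
Proof. by rewrite -GammaE.1; exact: ceil_half_bounds. Qed.

Lemma HQ_edge_partner x (j : int) y : (0 < j)%R -> x \in A j ->
  y \in A (partner j) -> H y x /\ H x y.
Proof.
move=> hj hx hy; have ne : A j != finset.set0 by apply/set0Pn; exists x.
by split; exists j; do 2 split => //; [right | left].
Qed.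

Definition avoid_edge (S : {set T}) a b := H a b /\ a \notin S /\ b \notin S.

Definition stretch_walk (S : {set T}) x p := [/\ is_walk (avoid_edge S) v p, last v p = x
  & wlen d v p <= (1 + 3 * eps) * d v x].

Lemma direct_walk (S : {set T}) x : v \notin S -> x \in q -> x \notin S ->
  (partner (group_of x)%:Z <= 0)%R -> stretch_walk S x [:: x].
Proof.
move=> hvS hx hxS hp; split => //=; last first.
  by rewrite addr0; have := dge0 v x; have := he0; nra.
split => //; split; last by [].
have := @HQ_edge_partner x _ v (isT : (0 < (group_of x)%:Z)%R) (mem_Agrp_group hx).
by rewrite Agrp_nonpos // inE eqxx => /(_ isT) [].
Qed.

Lemma extend_walk (S : {set T}) x y p : x \notin S -> y \notin S -> H y x ->
  d v y <= eps * d v x -> stretch_walk S y p -> stretch_walk S x (rcons p x).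
Proof.
move=> hxS hyS hyx hyx_le [hw hl hlen]; split.
- by apply/is_walk_rcons; rewrite hl.
- by rewrite last_rcons.
rewrite wlen_rcons hl.
have := dtri y v x; rewrite (dsym y v) => hyx_tri.
have h13 : 0 <= 1 + 3 * eps by have := he0; lra.
have := ler_wpM2l h13 hyx_le; have := dge0 v y; have := dge0 v x.
have := eps_le; nra.
Qed.

(* The partner group is [k+1] portals that sit [G] groups earlier in the
   order, so one of them survives the faults and is [eps]-close to [v]. *)
Lemma partner_survivor (S : {set T}) x : (#|S| <= k)%N -> x \in q ->
  (0 < partner (group_of x)%:Z)%R ->
  exists y, [/\ y \in A (partner (group_of x)%:Z), y \notin S & d v y <= eps * d v x].
Proof.
move=> hS hx hp; have [h1 h2] := partner_bounds (group_of x)%:Z; have hG := GammaE.2.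
set p := Defs.partner eps rho (group_of x)%:Z in hp h1 h2 *.
have hpg : (`|p|%N + G <= (group_of x).-1)%N by move: h1 h2 hp hG; clear; lia.
have hix : ((group_of x).-1 * k.+1 <= index x q)%N by rewrite /= leq_trunc_div.
have hsz : (index x q < size q)%N by rewrite index_mem.
have hcard : #|A p| = k.+1.
  apply: card_Agrp_full => //; apply: leq_trans (_ : (group_of x).-1 * k.+1 <= _)%N.
    by rewrite leq_mul2r; move: hpg; clear; lia.
  by move: hix hsz; clear; lia.
have /subsetPn [y hyA hyS] : ~~ (A p \subset S).
  by apply/negP => /subset_leq_card; rewrite hcard; move: hS; clear; lia.
exists y; split => //; have [hyq _] := Agrp_group hp hyA.
apply: index_gap_dist_le => //.
have : (index y q < `|p|%N * k.+1)%N.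
  by move: hyA; rewrite Agrp_pos // inE => /andP[_ /andP[_]].
move=> hiy; apply: leq_trans (_ : `|p|%N * k.+1 + G * k.+1 <= _)%N.
  by rewrite ltn_add2r.
by rewrite -mulnDl; apply: leq_trans hix; rewrite leq_mul2r; move: hpg; clear; lia.
Qed.

Lemma stretch_walk_exists (S : {set T}) : v \notin S -> (#|S| <= k)%N ->
  forall t x, x \in q -> x \notin S -> (group_of x <= 2 ^ t)%N ->
  exists2 p, stretch_walk S x p & (size p <= t.+1)%N.
Proof.
move=> hvS hS; elim=> [|t IH] x hx hxS hg;
  have [h1 h2] := partner_bounds (group_of x)%:Z; have hG := GammaE.2.
  exists [:: x] => //; apply: direct_walk => //.
  by rewrite expn0 in hg; move: h1 h2 hG hg; clear; lia.
have [hp|hp] := lerP (partner (group_of x)%:Z) 0.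
  by exists [:: x]; [exact: direct_walk | ].
have [y [hyA hyS hyx]] := partner_survivor hS hx hp.
have [hyq hpy] := Agrp_group hp hyA.
have hgy : (group_of y <= 2 ^ t)%N.
  by rewrite expnS in hg; move: hg hpy h1 h2 hG; clear; lia.
have [p hwp hsz] := IH y hyq hyS hgy.
exists (rcons p x); last by rewrite size_rcons.
apply: extend_walk hwp => //.
exact: (HQ_edge_partner _ (mem_Agrp_group hx) hyA).1.
Qed.

Lemma neighbours_v : [set y | `[< H v y >]] \subset
  index_window q 0 ((2 * G).+1 * k.+1).
Proof.
apply/fintype.subsetP => y; rewrite inE => /asboolP [j [hj [_ hc]]].
have hvq : v \notin q by rewrite mem_q v_notin_Q.
case: hc => [[hvA _]|[hyA hvA]].
  by have [] := Agrp_group hj hvA; rewrite (negbTE hvq).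
have [hp|hp] := lerP (partner j) 0; last first.
  by have [] := Agrp_group hp hvA; rewrite (negbTE hvq).
have [h1 h2] := partner_bounds j; have [hyq _] := Agrp_group hj hyA.
move: hyA; rewrite Agrp_pos // inE => /andP[_ /andP[_ hi]].
rewrite inE hyq /=; apply: leq_trans hi _.
by rewrite leq_mul2r; move: h1 h2 hp hj; clear; lia.
Qed.

(* Group [g] is joined to its partner and to the (at most two) groups whose partner is [g]. *)
Lemma neighbours_sub x : x != v -> [set y | `[< H x y >]] \subset
  A (partner (group_of x)%:Z) :|:
  (A (2 * group_of x + 2 * G)%N%:Z :|: A (2 * group_of x + 2 * G).+1%:Z).
Proof.
move=> hxv; apply/fintype.subsetP => y; rewrite inE => /asboolP [j [hj [_ hc]]].
case: hc => [[hxA hyA]|[hyA hxA]].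
  by have [_ e] := Agrp_group hj hxA; rewrite inE -e hyA.
have [hp|hp] := lerP (partner j) 0.
  by move: hxA; rewrite Agrp_nonpos // inE (negbTE hxv).
have [_ e] := Agrp_group hp hxA; have [h1 h2] := partner_bounds j.
rewrite e in h1 h2.
have [e'|e'] : j = (2 * group_of x + 2 * G)%N%:Z \/ j = (2 * group_of x + 2 * G).+1%:Z.
  by move: h1 h2; clear; lia.
all: by rewrite e' in hyA; rewrite !finset.in_setU hyA ?orbT.
Qed.

Lemma card_neighbours x : (#|[set y | `[< H x y >]]| <= 6 * G * k)%N.
Proof.
have hG := GammaE.2.
have [->|hxv] := eqVneq x v.
  apply: leq_trans (subset_leq_card neighbours_v) _.
  apply: leq_trans (card_index_window _ _ _) _; rewrite subn0.
  by move: hG hk1; clear; nia.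
apply: leq_trans (subset_leq_card (neighbours_sub hxv)) _.
apply: leq_trans (leq_card_setU _ _).1 _.
have c1 := card_Agrp (partner (group_of x)%:Z).
have c2 := (leq_card_setU (A (2 * group_of x + 2 * G)%N%:Z)
                          (A (2 * group_of x + 2 * G).+1%:Z)).1.
have c3 := card_Agrp (2 * group_of x + 2 * G)%N%:Z.
have c4 := card_Agrp (2 * group_of x + 2 * G).+1%:Z.
by move: c1 c2 c3 c4 hG hk1; clear; nia.
Qed.

Lemma fault_tolerant (S : {set T}) : S \subset Q -> (#|S| <= k)%N ->
  forall x, x \in Q :\: S -> exists p, stretch_walk S x p.
Proof.
move=> hSQ hS x; rewrite inE => /andP[hxS hxQ].
have hvS : v \notin S by apply: contra v_notin_Q => /(fintype.subsetP hSQ).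
have hxq : x \in q by rewrite mem_q.
have [p hp _] := stretch_walk_exists hvS hS hxq hxS (ltnW (ltn_expl _ (ltnSn 1))).
by exists p.
Qed.

Lemma max_degree x :
  #|[set y | `[< H x y >]]|%:R <= 6%N%:R * (Gamma eps rho)%:~R * k%:R :> R.
Proof. by rewrite GammaR -!natrM ler_nat card_neighbours. Qed.

Lemma hop_diameter x : x \in Q -> exists p, [/\ is_walk H v p, last v p = x,
  wlen d v p <= (1 + 3 * eps) * d v x & (size p)%:R <= 6%N%:R * ln (#|T|%:R : R)].
Proof.
move=> hxQ; have hxq : x \in q by rewrite mem_q.
have hn3 : (3 <= #|T|)%N by move: hk1 hkn; clear; lia.
set t := trunc_log 2 #|T|.
have hg : (group_of x <= 2 ^ t.+1)%N.
  apply: leq_trans (ltnW (trunc_log_ltn #|T| (isT : (1 < 2)%N))).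
  apply: leq_trans size_q; apply: leq_trans (_ : index x q < _)%N; last by rewrite index_mem.
  by rewrite /group_of ltnS leq_div.
have h0 z : z \notin (finset.set0 : {set T}) by rewrite inE.
have hk0 : (#|finset.set0 : {set T}| <= k)%N by rewrite finset.cards0.
have [p [hw hl hlen] hsz] := stretch_walk_exists (h0 v) hk0 hxq (h0 x) hg.
exists p; split => //; first by apply: is_walk_sub hw => a b [].
apply: le_trans (_ : t.+2%:R <= _); first by rewrite ler_nat.
by apply: log2_le_ln => //; apply: trunc_logP => //; move: hn3; clear; lia.
Qed.

End Spanner.

Theorem lemma11 :
  exists C : nat,
  forall (R : realType) (T : finType) (d : T -> T -> R) (rho eps : R) (k : nat)
    (v : T) (N : nat -> {set T}) (ctr : nat -> T -> T) (P : nat -> T -> {set T})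
    (q : seq T),
    is_metric d ->
    (forall x y : T, x != y -> 1 < d x y) ->
    is_doubling_dim d rho ->
    (1 <= k)%N -> (k <= #|T| - 2)%N ->
    0 < eps -> eps <= 3^-1 ->
    valid_nets d v eps N ->
    valid_ctr d v eps N ctr ->
    valid_portals d v eps k N ctr P ->
    valid_order d v eps N P q ->
    let Q := Qset d eps N P in
    let H := HQ_edge v eps k q rho in
    (forall S : {set T}, S \subset Q -> (#|S| <= k)%N ->
       forall x, x \in Q :\: S ->
       exists p : seq T,
         [/\ is_walk (fun a b => H a b /\ a \notin S /\ b \notin S) v p,
             last v p = x
           & wlen d v p <= (1 + 3 * eps) * d v x]) /\
    (forall x : T,
       (#|[set y | `[< H x y >]]|%:R <= C%:R * (Gamma eps rho)%:~R * k%:R :> R)) /\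
    (forall x, x \in Q ->
       exists p : seq T,
         [/\ is_walk H v p, last v p = x,
             wlen d v p <= (1 + 3 * eps) * d v x
           & (size p)%:R <= C%:R * ln (#|T|%:R : R)]).
Proof.
exists 6%N => R T d rho eps k v N ctr P q hmet _ hdim hk1 hkn he0 he3 hnets _ hport hord.
split; [|split].
- move=> S hSQ hS x hx.
  by have [p hp] := fault_tolerant hmet hdim hk1 hkn he0 he3 hnets hport hord hSQ hS hx; exists p.
- exact: max_degree hmet hdim hk1 hkn he0 he3 hport hord.
- exact: hop_diameter hmet hdim hk1 hkn he0 he3 hnets hport hord.
Qed.
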